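(* For every countable poset $P$, the space $\mathrm{UF}(P)$ is quasi-Polish, i.e. it is separable and admits a compatible Smyth-complete quasi-metric.
   Context: A filter on a poset $(P,\le_P)$ is an upward closed subset in which any two elements have a common lower bound in the set; it is unbounded if no $r\in P$ satisfies $r<_P p$ for all $p$ in it. $\mathrm{UF}(P)$ is the set of unbounded filters with topology generated by $N_p=\{F:p\in F\}$. A quasi-metric on $X$ is $d:X\times X\to[0,\infty)$ with $d(x,y)=d(y,x)=0\Rightarrow x=y$ and the triangle inequality; its topology has basis the balls $\{y:d(x,y)<r\}$. A sequence $(a_n)$ is left-Cauchy if $\forall\varepsilon>0\,\exists N\,\forall m>n>N\ d(a_n,a_m)<\varepsilon$; $(X,d)$ is Smyth-complete if every left-Cauchy sequence converges to some $a$ in the sense $d(a,a_n)\to0$ and $d(a_n,a)\to0$. *)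

From Stdlib Require Import Reals.
Open Scope R_scope.

Definition is_poset {P : Type} (le : P -> P -> Prop) : Prop :=
  (forall x, le x x) /\
  (forall x y, le x y -> le y x -> x = y) /\
  (forall x y z, le x y -> le y z -> le x z).

Definition lt_of {P : Type} (le : P -> P -> Prop) (r p : P) : Prop :=
  le r p /\ r <> p.

Definition countable_type (X : Type) : Prop :=
  exists f : X -> nat, forall x y, f x = f y -> x = y.

Definition countable_set {X : Type} (D : X -> Prop) : Prop :=
  exists f : X -> nat, forall x y, D x -> D y -> f x = f y -> x = y.

Definition is_filter {P : Type} (le : P -> P -> Prop) (F : P -> Prop) : Prop :=
  (forall p q, F p -> le p q -> F q) /\
  (forall p q, F p -> F q -> exists r, F r /\ le r p /\ le r q).

Definition unbounded {P : Type} (le : P -> P -> Prop) (F : P -> Prop) : Prop :=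
  ~ (exists r, forall p, F p -> lt_of le r p).

Definition unbounded_filter {P : Type} (le : P -> P -> Prop) (F : P -> Prop) : Prop :=
  is_filter le F /\ unbounded le F.

Definition UF {P : Type} (le : P -> P -> Prop) : Type :=
  { F : P -> Prop | unbounded_filter le F }.

Definition N_set {P : Type} (le : P -> P -> Prop) (p : P) : UF le -> Prop :=
  fun F => proj1_sig F p.

Definition generated_open {X I : Type} (S : I -> X -> Prop) (U : X -> Prop) : Prop :=
  forall x, U x -> exists l : list I,
    (forall i, List.In i l -> S i x) /\
    (forall y, (forall i, List.In i l -> S i y) -> U y).

Definition UF_open {P : Type} (le : P -> P -> Prop) : (UF le -> Prop) -> Prop :=
  generated_open (N_set le).

Definition is_quasi_metric {X : Type} (d : X -> X -> R) : Prop :=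
  (forall x y, 0 <= d x y) /\
  (forall x, d x x = 0) /\
  (forall x y, d x y = 0 -> d y x = 0 -> x = y) /\
  (forall x y z, d x z <= d x y + d y z).

Definition qball {X : Type} (d : X -> X -> R) (x : X) (r : R) : X -> Prop :=
  fun y => d x y < r.

Definition qm_open {X : Type} (d : X -> X -> R) (U : X -> Prop) : Prop :=
  forall y, U y -> exists x r, qball d x r y /\ (forall z, qball d x r z -> U z).

Definition left_Cauchy {X : Type} (d : X -> X -> R) (a : nat -> X) : Prop :=
  forall eps, 0 < eps -> exists N : nat, forall m n : nat,
    (N < n)%nat -> (n < m)%nat -> d (a n) (a m) < eps.

Definition seq_to_zero (u : nat -> R) : Prop :=
  forall eps, 0 < eps -> exists N : nat, forall n : nat, (N <= n)%nat -> Rabs (u n) < eps.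

Definition smyth_complete {X : Type} (d : X -> X -> R) : Prop :=
  forall a : nat -> X, left_Cauchy d a ->
    exists x : X, seq_to_zero (fun n => d x (a n)) /\ seq_to_zero (fun n => d (a n) x).

Definition separable {X : Type} (open : (X -> Prop) -> Prop) : Prop :=
  exists D : X -> Prop, countable_set D /\
    (forall U, open U -> (exists x, U x) -> exists x, U x /\ D x).

Definition quasi_Polish {X : Type} (open : (X -> Prop) -> Prop) : Prop :=
  separable open /\
  exists d : X -> X -> R, is_quasi_metric d /\
    (forall U, open U <-> qm_open d U) /\ smyth_complete d.

From Stdlib Require Import Reals Lra Lia List Cantor Wf_nat.
From Stdlib Require Import Classical ClassicalEpsilon FunctionalExtensionality
  PropExtensionality ProofIrrelevance.

(* Enumerate P injectively by f. For Q a subset of P and filters F, G, say that F meets Q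
   earlier than G when the f-first element of F in Q precedes every element of G in Q; this
   relation is irreflexive and cotransitive. Using countably many probe sets Q_n (singletons,
   the sets {s | ~ r < s} and the sets of common lower bounds of p and q), putting
   d(F, G) = 2^-n for the least n such that F meets Q_n earlier than G gives an
   ultra-quasi-metric. The singletons make it T0 and generate the topology, and each relation
   is decided by one element of F, so balls are open. A left-Cauchy sequence eventually
   settles every probe; its lower limit (the elements eventually in all terms) is then a
   filter thanks to the lower-bound probes, unbounded thanks to the {s | ~ r < s} probes, and
   the limit in both directions. A countable dense set is obtained by choosing, for each p, an
   unbounded filter containing p. *)

Open Scope R_scope.

Definition half_pow (n : nat) : R := / 2 ^ n.

Lemma half_pow_pos n : 0 < half_pow n.
Proof. apply Rinv_0_lt_compat, pow_lt; lra. Qed.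

Lemma half_pow_lt k n : (k < n)%nat -> half_pow n < half_pow k.
Proof.
  intros Hkn. apply Rinv_lt_contravar.
  - apply Rmult_lt_0_compat; apply pow_lt; lra.
  - apply Rlt_pow; [lra | exact Hkn].
Qed.

Lemma half_pow_le k n : (k <= n)%nat -> half_pow n <= half_pow k.
Proof.
  intros Hkn. destruct (Nat.eq_dec k n) as [->|Hne]; [lra|].
  apply Rlt_le, half_pow_lt; lia.
Qed.

Lemma half_pow_small eps : 0 < eps -> exists K, half_pow K < eps.
Proof.
  intros Heps. destruct (pow_lt_1_zero (/ 2)) with (y := eps) as [N HN].
  - rewrite Rabs_pos_eq; lra.
  - exact Heps.
  - exists N. specialize (HN N (le_n N)). unfold half_pow. rewrite <- pow_inv.
    rewrite Rabs_pos_eq in HN; [exact HN|]. apply pow_le; lra.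
Qed.

Lemma exists_least (Q : nat -> Prop) :
  (exists n, Q n) -> exists n, Q n /\ forall m, Q m -> (n <= m)%nat.
Proof.
  intros HQ.
  destruct (dec_inh_nat_subset_has_unique_least_element Q (fun n => classic (Q n)) HQ)
    as [n [Hn _]].
  exists n; exact Hn.
Qed.

Lemma eventually_forall_le (R : nat -> nat -> Prop) :
  (forall j, exists N, forall n, (N <= n)%nat -> R j n) ->
  forall K, exists N, forall n, (N <= n)%nat -> forall j, (j <= K)%nat -> R j n.
Proof.
  intros HR K. induction K as [|K [N1 H1]].
  - destruct (HR 0%nat) as [N HN]. exists N. intros n Hn j Hj.
    replace j with 0%nat by lia. auto.
  - destruct (HR (S K)) as [N2 H2]. exists (Nat.max N1 N2). intros n Hn j Hj.
    destruct (Nat.eq_dec j (S K)) as [->|Hne]; [apply H2 | apply H1]; lia.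
Qed.

Section FirstIndexDistance.

Context {X : Type} (T : nat -> X -> X -> Prop).

Definition index_dist (x y : X) : R :=
  match excluded_middle_informative (exists n, T n x y) with
  | left H => half_pow (proj1_sig (constructive_indefinite_description _ (exists_least _ H)))
  | right _ => 0
  end.

Lemma index_dist_cases x y :
  (index_dist x y = 0 /\ forall n, ~ T n x y) \/
  exists n, index_dist x y = half_pow n /\ T n x y /\ forall m, T m x y -> (n <= m)%nat.
Proof.
  unfold index_dist. destruct (excluded_middle_informative _) as [H|H].
  - right. destruct (constructive_indefinite_description _ _) as [n [Tn Hmin]]. eauto.
  - left. split; [reflexivity|]. intros n Tn. apply H; eauto.
Qed.

Lemma index_dist_lt_iff x y K :
  index_dist x y < half_pow K <-> forall j, (j <= K)%nat -> ~ T j x y.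
Proof.
  destruct (index_dist_cases x y) as [[-> Hnone]|[n [-> [Tn Hmin]]]].
  - split; intros; [apply Hnone | apply half_pow_pos].
  - split.
    + intros Hlt j Hj Tj. pose proof (half_pow_le n K ltac:(specialize (Hmin j Tj); lia)).
      lra.
    + intros H. destruct (Nat.lt_ge_cases K n) as [HKn|HnK].
      * apply half_pow_lt; exact HKn.
      * exfalso; exact (H n HnK Tn).
Qed.

Lemma index_dist_nonneg x y : 0 <= index_dist x y.
Proof.
  destruct (index_dist_cases x y) as [[-> _]|[n [-> _]]]; [lra | apply Rlt_le, half_pow_pos].
Qed.

Lemma index_dist_eq0 x y : index_dist x y = 0 <-> forall n, ~ T n x y.
Proof.
  destruct (index_dist_cases x y) as [[-> Hnone]|[n [-> [Tn _]]]].
  - tauto.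
  - pose proof (half_pow_pos n). split; [lra|]. intros Hnone; exfalso; exact (Hnone n Tn).
Qed.

Lemma left_Cauchy_index_dist (a : nat -> X) :
  left_Cauchy index_dist a ->
  forall K, exists N, forall m n, (N < n)%nat -> (n < m)%nat ->
    forall j, (j <= K)%nat -> ~ T j (a n) (a m).
Proof.
  intros Ha K. destruct (Ha (half_pow K) (half_pow_pos K)) as [N HN].
  exists N. intros m n Hn Hm. apply index_dist_lt_iff. exact (HN m n Hn Hm).
Qed.

Lemma seq_to_zero_index_dist (x y : nat -> X) :
  (forall j, exists N, forall n, (N <= n)%nat -> ~ T j (x n) (y n)) ->
  seq_to_zero (fun n => index_dist (x n) (y n)).
Proof.
  intros Hev eps Heps. destruct (half_pow_small eps Heps) as [K HK].
  destruct (eventually_forall_le _ Hev K) as [N HN]. exists N. intros n Hn.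
  rewrite Rabs_pos_eq by apply index_dist_nonneg.
  assert (index_dist (x n) (y n) < half_pow K) by (apply index_dist_lt_iff, HN, Hn).
  lra.
Qed.

Hypothesis T_irrefl : forall n x, ~ T n x x.
Hypothesis T_cotrans : forall n x y z, T n x z -> T n x y \/ T n y z.

Lemma index_dist_refl x : index_dist x x = 0.
Proof. apply index_dist_eq0. intros n; apply T_irrefl. Qed.

Lemma index_dist_triangle x y z : index_dist x z <= index_dist x y + index_dist y z.
Proof.
  pose proof (index_dist_nonneg x y). pose proof (index_dist_nonneg y z).
  destruct (index_dist_cases x z) as [[-> _]|[n [-> [Tn _]]]]; [lra|].
  assert (Hfar : forall u v, T n u v -> ~ index_dist u v < half_pow n).
  { intros u v Tuv. rewrite index_dist_lt_iff. intros Hnot. exact (Hnot n (le_n n) Tuv). }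
  destruct (T_cotrans n x y z Tn) as [Txy|Tyz].
  - pose proof (Hfar _ _ Txy). lra.
  - pose proof (Hfar _ _ Tyz). lra.
Qed.

Lemma index_dist_quasi_metric :
  (forall x y, (forall n, ~ T n x y) -> (forall n, ~ T n y x) -> x = y) ->
  is_quasi_metric index_dist.
Proof.
  intros Hsep. split; [|split; [|split]].
  - apply index_dist_nonneg.
  - apply index_dist_refl.
  - intros x y Hxy Hyx. apply Hsep; apply index_dist_eq0; assumption.
  - apply index_dist_triangle.
Qed.

End FirstIndexDistance.

Section Earlier.

Context {P : Type} (f : P -> nat).

Lemma exists_least_rank (A : P -> Prop) :
  (exists s, A s) -> exists s, A s /\ forall s', A s' -> (f s <= f s')%nat.
Proof.
  intros [s As].
  destruct (exists_least (fun n => exists s, A s /\ f s = n)) as [n [[s0 [As0 <-]] Hmin]].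
  - exists (f s), s. auto.
  - exists s0. split; [exact As0|]. intros s' As'. apply Hmin. eauto.
Qed.

Definition earlier (Q F G : P -> Prop) : Prop :=
  exists s, F s /\ Q s /\ forall s', G s' -> Q s' -> (f s < f s')%nat.

Lemma earlier_irrefl Q F : ~ earlier Q F F.
Proof. intros [s [Fs [Qs Hs]]]. specialize (Hs s Fs Qs). lia. Qed.

Lemma not_earlier_iff Q F G :
  ~ earlier Q F G <->
  forall s, F s -> Q s -> exists s', G s' /\ Q s' /\ (f s' <= f s)%nat.
Proof.
  split.
  - intros Hne s Fs Qs. apply NNPP; intros Hnone. apply Hne.
    exists s. repeat split; auto. intros s' Gs' Qs'.
    destruct (Nat.lt_ge_cases (f s) (f s')) as [Hlt|Hge]; [exact Hlt|].
    exfalso; apply Hnone; eauto.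
  - intros H [s [Fs [Qs Hs]]]. destruct (H s Fs Qs) as [s' [Gs' [Qs' Hle]]].
    specialize (Hs s' Gs' Qs'). lia.
Qed.

Lemma earlier_cotrans Q F G H : earlier Q F H -> earlier Q F G \/ earlier Q G H.
Proof.
  intros HFH. destruct (classic (earlier Q F G)) as [HFG|HFG]; [left; exact HFG|right].
  destruct HFH as [s [Fs [Qs Hs]]].
  destruct (proj1 (not_earlier_iff Q F G) HFG s Fs Qs) as [s' [Gs' [Qs' Hle]]].
  exists s'. repeat split; [exact Gs'|exact Qs'|].
  intros s'' Hs'' Qs''. specialize (Hs s'' Hs'' Qs''). lia.
Qed.

Lemma earlier_singleton p F G : earlier (fun s => s = p) F G <-> F p /\ ~ G p.
Proof.
  split.
  - intros [s [Fs [-> Hs]]]. split; [exact Fs|]. intros Gp. specialize (Hs p Gp eq_refl). lia.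
  - intros [Fp Gp]. exists p. repeat split; auto. intros s' Gs' ->. contradiction.
Qed.

(* Whether [Y] meets [Q] earlier than [Z] is decided by the first element of [Y] in [Q]. *)
Lemma earlier_local Q Y :
  exists l, (forall i, In i l -> Y i) /\
    forall Z : P -> Prop, (forall i, In i l -> Z i) -> ~ earlier Q Y Z.
Proof.
  destruct (classic (exists s, Y s /\ Q s)) as [Hex|Hno].
  - destruct (exists_least_rank _ Hex) as [s0 [[Ys0 Qs0] Hmin]].
    exists (s0 :: nil). split.
    + intros i [<-|[]]. exact Ys0.
    + intros Z HZ. apply not_earlier_iff. intros s Ys Qs. exists s0.
      repeat split; auto. apply HZ; left; reflexivity.
  - exists nil. split; [intros i []|]. intros Z _ [s [Ys [Qs _]]]. apply Hno; eauto.
Qed.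

Section LowerLimit.

Context (A : nat -> P -> Prop).

Definition lower_limit (p : P) : Prop := exists n0, forall n, (n0 <= n)%nat -> A n p.

Definition eventually_stable (Q : P -> Prop) : Prop :=
  exists N, forall n m, (N < n)%nat -> (n < m)%nat -> ~ earlier Q (A n) (A m).

Definition membership_stable : Prop := forall k, exists N, forall s n m,
  (f s <= k)%nat -> (N < n)%nat -> (n < m)%nat -> A n s -> A m s.

Hypothesis A_membership_stable : membership_stable.

Lemma lower_limit_of_stable k : exists N, forall s n,
  (f s <= k)%nat -> (N < n)%nat -> A n s -> lower_limit s.
Proof.
  destruct (A_membership_stable k) as [N HN]. exists N. intros s n Hs Hn As.
  exists n. intros m Hm. destruct (Nat.eq_dec n m) as [<-|Hne]; [exact As|].
  apply (HN s n m); auto; lia.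
Qed.

Lemma lower_limit_meets Q : eventually_stable Q ->
  exists N, forall n, (N < n)%nat ->
    (exists s, A n s /\ Q s) -> exists s, lower_limit s /\ Q s.
Proof.
  intros [N1 HN1]. exists N1. intros n Hn Hex.
  destruct (exists_least_rank _ Hex) as [s0 [[As0 Qs0] _]].
  destruct (lower_limit_of_stable (f s0)) as [N2 HN2].
  set (m := S (Nat.max n N2)).
  assert (Hnm : ~ earlier Q (A n) (A m)) by (apply HN1; unfold m; lia).
  destruct (proj1 (not_earlier_iff _ _ _) Hnm s0 As0 Qs0) as [s [Ams [Qs Hle]]].
  exists s. split; [|exact Qs]. apply (HN2 s m); auto. unfold m; lia.
Qed.

Lemma lower_limit_limit Q : eventually_stable Q ->
  exists N, forall n, (N <= n)%nat ->
    ~ earlier Q lower_limit (A n) /\ ~ earlier Q (A n) lower_limit.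
Proof.
  intros HQ. destruct (classic (exists s, lower_limit s /\ Q s)) as [Hex|Hno].
  - destruct (exists_least_rank _ Hex) as [s0 [[Ls0 Qs0] Hmin]].
    destruct Ls0 as [n0 Hn0]. destruct (lower_limit_of_stable (f s0)) as [N2 HN2].
    exists (Nat.max n0 (S N2)). intros n Hn. split; apply not_earlier_iff.
    + intros s Ls Qs. exists s0. repeat split; [apply Hn0; lia | exact Qs0 |].
      apply Hmin. split; assumption.
    + intros s As Qs. destruct (Nat.le_gt_cases (f s0) (f s)) as [Hle|Hgt].
      * exists s0. repeat split; [|exact Qs0|exact Hle]. exists n0. exact Hn0.
      * exists s. repeat split; [|exact Qs|lia]. apply (HN2 s n); auto; lia.
  - destruct (lower_limit_meets Q HQ) as [N HN]. exists (S N). intros n Hn.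
    split; intros [s [Hs [Qs _]]]; apply Hno.
    + eauto.
    + apply (HN n); [lia|eauto].
Qed.

End LowerLimit.

End Earlier.

Inductive probe (P : Type) : Type :=
  | Member (p : P)
  | NotAbove (r : P)
  | LowerBound (p q : P).
Arguments Member {P}. Arguments NotAbove {P}. Arguments LowerBound {P}.

Definition probe_set {P : Type} (le : P -> P -> Prop) (c : probe P) : P -> Prop :=
  match c with
  | Member p => fun s => s = p
  | NotAbove r => fun s => ~ lt_of le r s
  | LowerBound p q => fun s => le s p /\ le s q
  end.

Definition probe_code {P : Type} (f : P -> nat) (c : probe P) : nat :=
  match c with
  | Member p => 3 * f p
  | NotAbove r => 3 * f r + 1
  | LowerBound p q => 3 * to_nat (f p, f q) + 2
  end%nat.

Lemma probe_code_inj {P : Type} (f : P -> nat) :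
  (forall x y, f x = f y -> x = y) -> forall c c', probe_code f c = probe_code f c' -> c = c'.
Proof.
  intros Hf [p|r|p q] [p'|r'|p' q']; unfold probe_code; intros E; try lia.
  - f_equal; apply Hf; lia.
  - f_equal; apply Hf; lia.
  - assert (E' : to_nat (f p, f q) = to_nat (f p', f q')) by lia.
    apply (f_equal of_nat) in E'. rewrite !cancel_of_to in E'.
    injection E'; intros; f_equal; apply Hf; assumption.
Qed.

Lemma UF_eq {P : Type} (le : P -> P -> Prop) (x y : UF le) :
  (forall p, proj1_sig x p <-> proj1_sig y p) -> x = y.
Proof.
  destruct x as [X HX], y as [Y HY]; simpl. intros H.
  assert (X = Y) by (extensionality p; apply propositional_extensionality; auto).
  subst. f_equal. apply proof_irrelevance.
Qed.

Lemma filter_lower_bound {P : Type} (le : P -> P -> Prop)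
  (le_trans : forall x y z, le x y -> le y z -> le x z) F m0 l :
  is_filter le F -> F m0 -> (forall i, In i l -> F i) ->
  exists m, F m /\ forall i, In i l -> le m i.
Proof.
  intros HF Fm0. induction l as [|b l IH]; intros Hl.
  - exists m0. split; [exact Fm0|]. intros i [].
  - destruct IH as [m [Fm Hm]]; [intros i Hi; apply Hl; right; exact Hi|].
    destruct (proj2 HF b m (Hl b (or_introl eq_refl)) Fm) as [r [Fr [Hrb Hrm]]].
    exists r. split; [exact Fr|]. intros i [<-|Hi]; [exact Hrb|]. eauto.
Qed.

Lemma countable_set_image_or_subsingleton {A X : Type} (f : A -> nat) (h : A -> option X)
  (E : X -> Prop) :
  (forall a b, f a = f b -> a = b) -> (forall x y, E x -> E y -> x = y) ->
  countable_set (fun x => (exists a, h a = Some x) \/ E x).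
Proof.
  intros Hf HE.
  exists (fun x => match excluded_middle_informative (exists a, h a = Some x) with
           | left H => S (f (proj1_sig (constructive_indefinite_description _ H)))
           | right _ => 0%nat
           end).
  intros x y Dx Dy.
  destruct (excluded_middle_informative (exists a, h a = Some x)) as [Hx|Hx];
  destruct (excluded_middle_informative (exists a, h a = Some y)) as [Hy|Hy];
    try discriminate.
  - destruct (constructive_indefinite_description _ Hx) as [a Ha].
    destruct (constructive_indefinite_description _ Hy) as [b Hb]. simpl.
    intros Ecode. injection Ecode; intros Eab. apply Hf in Eab. subst b. congruence.
  - intros _. destruct Dx as [Dx|Dx]; [contradiction|].
    destruct Dy as [Dy|Dy]; [contradiction|]. exact (HE x y Dx Dy).
Qed.

Section UnboundedFilters.

Context {P : Type} (le : P -> P -> Prop) (f : P -> nat).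
Hypothesis f_inj : forall x y, f x = f y -> x = y.

Definition UF_earlier (n : nat) (F G : UF le) : Prop :=
  exists c, probe_code f c = n /\ earlier f (probe_set le c) (proj1_sig F) (proj1_sig G).

Definition UF_dist : UF le -> UF le -> R := index_dist UF_earlier.

Lemma UF_earlier_probe c F G :
  UF_earlier (probe_code f c) F G <-> earlier f (probe_set le c) (proj1_sig F) (proj1_sig G).
Proof.
  split; [|intros H; exists c; auto].
  intros [c' [E H]]. apply probe_code_inj in E; [subst c'; exact H | exact f_inj].
Qed.

Lemma UF_earlier_index_cases j :
  (exists c, j = probe_code f c) \/ (forall F G, ~ UF_earlier j F G).
Proof.
  destruct (classic (exists c, j = probe_code f c)) as [Hc|Hnone]; [left; exact Hc|].
  right. intros F G [c [E _]]. apply Hnone; eauto.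
Qed.

Lemma UF_earlier_member p F G :
  UF_earlier (3 * f p) F G <-> proj1_sig F p /\ ~ proj1_sig G p.
Proof. exact (iff_trans (UF_earlier_probe (Member p) F G) (earlier_singleton f p _ _)). Qed.

Lemma UF_dist_quasi_metric : is_quasi_metric UF_dist.
Proof.
  apply index_dist_quasi_metric.
  - intros n x [c [_ H]]. exact (earlier_irrefl f _ _ H).
  - intros n x y z [c [E H]].
    destruct (earlier_cotrans f _ _ (proj1_sig y) _ H); [left|right]; exists c; auto.
  - intros x y Hxy Hyx. apply UF_eq. intros p.
    split; intros Hp; apply NNPP; intros Hnp.
    + apply (Hxy (3 * f p)%nat), UF_earlier_member; auto.
    + apply (Hyx (3 * f p)%nat), UF_earlier_member; auto.
Qed.

Lemma UF_dist_refl x : UF_dist x x = 0.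
Proof. exact (proj1 (proj2 UF_dist_quasi_metric) x). Qed.

Lemma UF_open_qm_open U : UF_open le U -> qm_open UF_dist U.
Proof.
  intros HU y Uy. destruct (HU y Uy) as [l [Hl Hsub]].
  set (K := list_max (map (fun i => 3 * f i)%nat l)).
  exists y, (half_pow K). split.
  - unfold qball. rewrite UF_dist_refl. apply half_pow_pos.
  - intros z Hz. apply Hsub. intros i Hi. apply NNPP; intros Hzi.
    unfold qball, UF_dist in Hz. rewrite index_dist_lt_iff in Hz.
    apply (Hz (3 * f i)%nat).
    + assert (HK : Forall (fun k => k <= K)%nat (map (fun i => 3 * f i)%nat l))
        by (apply list_max_le; lia).
      rewrite Forall_forall in HK. apply HK, (in_map (fun i => 3 * f i)%nat), Hi.
    + apply UF_earlier_member. split; [apply Hl, Hi | exact Hzi].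
Qed.

Lemma UF_earlier_local_index j (y : UF le) :
  exists l, (forall i, In i l -> proj1_sig y i) /\
    forall z : UF le, (forall i, In i l -> proj1_sig z i) -> ~ UF_earlier j y z.
Proof.
  destruct (UF_earlier_index_cases j) as [[c ->]|Hnone].
  - destruct (earlier_local f (probe_set le c) (proj1_sig y)) as [l [Hl Hloc]].
    exists l. split; [exact Hl|]. intros z Hz. rewrite UF_earlier_probe. exact (Hloc _ Hz).
  - exists nil. split; [intros i []|]. intros z _. apply Hnone.
Qed.

Lemma UF_earlier_local K (y : UF le) :
  exists l, (forall i, In i l -> proj1_sig y i) /\
    forall z : UF le, (forall i, In i l -> proj1_sig z i) ->
      forall j, (j <= K)%nat -> ~ UF_earlier j y z.
Proof.
  induction K as [|K [l1 [Hl1 H1]]].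
  - destruct (UF_earlier_local_index 0 y) as [l [Hl H]]. exists l. split; [exact Hl|].
    intros z Hz j Hj. replace j with 0%nat by lia. exact (H z Hz).
  - destruct (UF_earlier_local_index (S K) y) as [l2 [Hl2 H2]].
    exists (l1 ++ l2). split.
    + intros i Hi. apply in_app_iff in Hi as [Hi|Hi]; auto.
    + intros z Hz j Hj.
      destruct (Nat.eq_dec j (S K)) as [->|Hne]; [apply H2 | apply H1; [|lia]];
        intros i Hi; apply Hz, in_app_iff; auto.
Qed.

Lemma qm_open_UF_open U : qm_open UF_dist U -> UF_open le U.
Proof.
  intros HU y Uy. destruct (HU y Uy) as [x [r [Hxy Hball]]]. unfold qball in *.
  destruct (half_pow_small (r - UF_dist x y)) as [K HK]; [lra|].
  destruct (UF_earlier_local K y) as [l [Hl Hloc]].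
  exists l. split; [exact Hl|]. intros z Hz. apply Hball.
  assert (UF_dist y z < half_pow K) by (apply index_dist_lt_iff, Hloc, Hz).
  pose proof (proj2 (proj2 (proj2 UF_dist_quasi_metric)) x y z). lra.
Qed.

Lemma lower_limit_unbounded_filter (A : nat -> P -> Prop) :
  (forall n, unbounded_filter le (A n)) ->
  membership_stable f A ->
  (forall c, eventually_stable f A (probe_set le c)) ->
  unbounded_filter le (lower_limit A).
Proof.
  intros HA Hmem Hstab. split; [split|].
  - intros p q [n0 Hn0] Hpq. exists n0. intros n Hn.
    exact (proj1 (proj1 (HA n)) p q (Hn0 n Hn) Hpq).
  - intros p q [n1 Hn1] [n2 Hn2].
    destruct (lower_limit_meets f A Hmem _ (Hstab (LowerBound p q))) as [N HN].
    set (n := S (Nat.max N (Nat.max n1 n2))).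
    destruct (proj2 (proj1 (HA n)) p q (Hn1 n ltac:(unfold n; lia))
                (Hn2 n ltac:(unfold n; lia))) as [r [Ar [Hrp Hrq]]].
    destruct (HN n ltac:(unfold n; lia)) as [s [Ls [Hsp Hsq]]];
      [exists r; repeat split; assumption|].
    exists s. auto.
  - intros [r Hr].
    destruct (lower_limit_meets f A Hmem _ (Hstab (NotAbove r))) as [N HN].
    destruct (HN (S N) (Nat.lt_succ_diag_r N)) as [s [Ls Hs]]; [|exact (Hs (Hr s Ls))].
    apply NNPP; intros Hnone. apply (proj2 (HA (S N))). exists r.
    intros p Ap. apply NNPP; intros Hnlt. apply Hnone. exists p. split; assumption.
Qed.

Lemma UF_dist_smyth_complete : smyth_complete UF_dist.
Proof.
  intros a Ha. set (A := fun n => proj1_sig (a n)).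
  pose proof (left_Cauchy_index_dist UF_earlier a Ha) as Cau.
  assert (Hmem : membership_stable f A).
  { intros k. destruct (Cau (3 * k)%nat) as [N HN]. exists N.
    intros s n m Hs Hn Hm As. apply NNPP; intros Ams.
    apply (HN m n Hn Hm (3 * f s)%nat); [lia|]. apply UF_earlier_member. split; assumption. }
  assert (Hstab : forall c, eventually_stable f A (probe_set le c)).
  { intros c. destruct (Cau (probe_code f c)) as [N HN]. exists N.
    intros n m Hn Hm H. apply (HN m n Hn Hm _ (le_n _)), UF_earlier_probe, H. }
  set (L := exist _ (lower_limit A)
              (lower_limit_unbounded_filter A (fun n => proj2_sig (a n)) Hmem Hstab) : UF le).
  assert (Hlim : forall j, exists N, forall n, (N <= n)%nat ->
                   ~ UF_earlier j L (a n) /\ ~ UF_earlier j (a n) L).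
  { intros j. destruct (UF_earlier_index_cases j) as [[c ->]|Hnone].
    - destruct (lower_limit_limit f A Hmem _ (Hstab c)) as [N HN]. exists N.
      intros n Hn. rewrite !UF_earlier_probe. exact (HN n Hn).
    - exists 0%nat. intros n _. split; apply Hnone. }
  exists L. split.
  - apply (seq_to_zero_index_dist UF_earlier (fun _ => L) a).
    intros j. destruct (Hlim j) as [N HN]. exists N. intros n Hn. apply HN, Hn.
  - apply (seq_to_zero_index_dist UF_earlier a (fun _ => L)).
    intros j. destruct (Hlim j) as [N HN]. exists N. intros n Hn. apply HN, Hn.
Qed.

Definition some_UF_containing (p : P) : option (UF le) :=
  match excluded_middle_informative (exists G : UF le, proj1_sig G p) with
  | left H => Some (proj1_sig (constructive_indefinite_description _ H))
  | right _ => None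
  end.

Lemma some_UF_containing_spec p G : some_UF_containing p = Some G -> proj1_sig G p.
Proof.
  unfold some_UF_containing. destruct (excluded_middle_informative _) as [H|H]; [|discriminate].
  intros E. injection E; intros <-. exact (proj2_sig (constructive_indefinite_description _ H)).
Qed.

Lemma some_UF_containing_some p :
  (exists G : UF le, proj1_sig G p) -> exists G, some_UF_containing p = Some G.
Proof.
  unfold some_UF_containing. destruct (excluded_middle_informative _) as [H|H]; [eauto|].
  intros Hex; contradiction.
Qed.

(* The empty filter, which is unbounded only when [P] is empty, has to be added by hand. *)
Lemma UF_separable (le_trans : forall x y z, le x y -> le y z -> le x z) :
  separable (UF_open le).
Proof.
  exists (fun G => (exists p, some_UF_containing p = Some G) \/ (forall p, ~ proj1_sig G p)).
  split.
  - apply (countable_set_image_or_subsingleton f); [exact f_inj|].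
    intros x y Hx Hy. apply UF_eq. intros p.
    split; intros Hp; exfalso; [apply (Hx p) | apply (Hy p)]; exact Hp.
  - intros U HU [x Ux]. destruct (HU x Ux) as [l [Hl Hsub]].
    destruct (classic (exists m, proj1_sig x m)) as [[m0 Hm0]|Hempty].
    + destruct (filter_lower_bound le le_trans (proj1_sig x) m0 l (proj1 (proj2_sig x)) Hm0 Hl)
        as [m [xm Hm]].
      destruct (some_UF_containing_some m (ex_intro _ x xm)) as [G HG].
      exists G. split; [|left; eauto].
      apply Hsub. intros i Hi.
      exact (proj1 (proj1 (proj2_sig G)) m i (some_UF_containing_spec m G HG) (Hm i Hi)).
    + exists x. split; [exact Ux|]. right. intros p Hp. eauto.
Qed.

End UnboundedFilters.

Theorem theorem2p10 (P : Type) (le : P -> P -> Prop)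
  (Hposet : is_poset le) (Hcount : countable_type P) :
  quasi_Polish (UF_open le).
Proof.
  destruct Hcount as [f f_inj].
  destruct Hposet as [_ [_ le_trans]].
  split; [exact (UF_separable le f f_inj le_trans)|].
  exists (UF_dist le f). split; [|split].
  - exact (UF_dist_quasi_metric le f f_inj).
  - intros U. split; [apply UF_open_qm_open | apply qm_open_UF_open]; exact f_inj.
  - exact (UF_dist_smyth_complete le f f_inj).
Qed.
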